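(* $\mathsf{SetEquality}\in\mathsf{dAM}[O(\log n)]$. Here, for a fixed constant $c\in\mathbb N$, in $\mathsf{SetEquality}$ each node $u$ of the $n$-node communication graph holds two lists $a_{u,1},\dots,a_{u,\ell}$ and $b_{u,1},\dots,b_{u,\ell}$ with $\ell\le n$ and all $a_{u,i},b_{u,i}\in\{0,1\}^{c\log n}$; the instance is in the language iff the multisets $\mathcal A=\{a_{u,i}:u\in V,i\in[\ell]\}$ and $\mathcal B=\{b_{u,i}:u\in V,i\in[\ell]\}$ are equal (as multisets).
   Context: Distributed interactive proofs (model). An instance consists of a connected communication graph $G=(V,E)$ with $|V|=n$, where each node has a unique identifier of $O(\log n)$ bits, knows $n$, knows its own identifier, its local input (if the problem has local inputs), and the identifiers of its neighbours (with an arbitrary port numbering of its incident edges). A prover, who sees the whole instance, interacts with all nodes in $r$ alternating messages. In a verifier (node) message each node independently samples fresh uniformly random bits and sends them to the prover (public coins). In a prover message the prover sends each node a string. Nodes may additionally exchange the strings they received from the prover with their neighbours in $G$. At the end each node deterministically accepts or rejects as a function of its local information, its own random bits, the strings it received from the prover and those its neighbours received; the instance is accepted iff all nodes accept. The proof size is the maximum number of bits in any single message between the prover and any node. A language $\mathcal L$ (set of instances) is in $\mathsf{dIP}[r,\ell]$ if there is an $r$-message protocol of proof size $\ell=\ell(n)$ such that (completeness) for every instance in $\mathcal L$ some prover makes all nodes accept with probability $>2/3$, and (soundness) for every instance not in $\mathcal L$ and every prover, all nodes accept with probability $<1/3$ (probabilities over the nodes' coins). $\mathsf{dAM}[\ell]$,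 $\mathsf{dMAM}[\ell]$, $\mathsf{dAMAM}[\ell]$, $\mathsf{dMAMAM}[\ell]$ denote the cases of 2, 3, 4, 5 messages, where the letters indicate who sends each message in order (A = nodes send random coins, M = prover). *)

(* Model of distributed interactive proofs (dAM = 2 messages:
   nodes send public coins, then the prover answers), and SetEquality. *)
From mathcomp Require Import all_boot.
Set Implicit Arguments. Unset Strict Implicit. Unset Printing Implicit Defensive.

(* An instance on n nodes (nodes are 'I_n, an internal naming invisible to
   the nodes).  [adj u] is the list of neighbours of u in port order
   (arbitrary port numbering), [ident u] the identifier of u, [inp u] its
   local input of type I. *)
Record instance (I : Type) (n : nat) := Instance {
  adj : 'I_n -> seq 'I_n;
  ident : 'I_n -> nat;
  inp : 'I_n -> I }.

Definition edge (I : Type) (n : nat) (G : instance I n) : rel 'I_n :=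
  fun u v => v \in adj G u.

(* Well-formedness of the communication graph and identifiers:
   simple undirected connected graph, unique identifiers of O(log n) bits,
   i.e. identifiers below n ^ idc for a fixed model constant idc. *)
Definition wf_instance (idc : nat) (I : Type) (n : nat) (G : instance I n) : Prop :=
  [/\ forall u, uniq (adj G u) /\ u \notin adj G u,
      forall u v, (v \in adj G u) = (u \in adj G v),
      forall u v, connect (edge G) u v,
      injective (ident G) &
      forall u, ident G u < n ^ idc].

(* A dAM protocol: [coins n] random bits per node, proof size [psize n],
   and the deterministic decision of a node, as a function of
   n, own id, own input, neighbours' ids (port order), own random bits,
   own prover string, neighbours' prover strings (port order). *)
Record dAM_protocol (I : Type) := DAMProtocol {
  coins : nat -> nat;
  psize : nat -> nat;
  decide : nat -> nat -> I -> seq nat -> seq bool -> seq bool -> seq (seq bool) -> bool }.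

Definition coin_space (I : Type) (P : dAM_protocol I) (n : nat) : finType :=
  {ffun 'I_n -> (coins P n).-tuple bool}.

Definition prover (I : Type) (P : dAM_protocol I) (n : nat) : Type :=
  coin_space P n -> 'I_n -> seq bool.

Definition prover_ok (I : Type) (P : dAM_protocol I) (n : nat) (M : prover P n) : Prop :=
  forall r u, size (M r u) <= psize P n.

Definition node_accepts (I : Type) (P : dAM_protocol I) (n : nat) (G : instance I n)
    (r : coin_space P n) (m : 'I_n -> seq bool) (u : 'I_n) : bool :=
  decide P n (ident G u) (inp G u) [seq ident G v | v <- adj G u]
         (val (r u)) (m u) [seq m v | v <- adj G u].

Definition all_accept (I : Type) (P : dAM_protocol I) (n : nat) (G : instance I n)
    (M : prover P n) (r : coin_space P n) : bool :=
  [forall u, node_accepts G r (M r) u].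

Definition n_accept (I : Type) (P : dAM_protocol I) (n : nat) (G : instance I n)
    (M : prover P n) : nat :=
  #|[pred r : coin_space P n | all_accept G M r]|.

Definition dAM_decides (I : Type) (wf : forall n, instance I n -> Prop)
    (L : forall n, instance I n -> Prop) (P : dAM_protocol I) : Prop :=
  [/\ forall n, coins P n <= psize P n,
      forall n (G : instance I n), wf n G -> L n G ->
        exists M : prover P n, prover_ok M /\
          2 * #|{: coin_space P n}| < 3 * n_accept G M &
      forall n (G : instance I n), wf n G -> ~ L n G ->
        forall M : prover P n, prover_ok M ->
          3 * n_accept G M < #|{: coin_space P n}| ].

Definition is_O_log (f : nat -> nat) : Prop :=
  exists K N0, forall n, N0 <= n -> f n <= K * trunc_log 2 n.

Definition in_dAM_log (idc : nat) (I : Type) (wfI : forall n, instance I n -> Prop)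
    (L : forall n, instance I n -> Prop) : Prop :=
  exists P : dAM_protocol I,
    dAM_decides (fun n G => wf_instance idc G /\ wfI n G) L P /\ is_O_log (psize P).

Definition SE_input := (seq (seq bool) * seq (seq bool))%type.

Definition wf_SE (c : nat) (n : nat) (G : instance SE_input n) : Prop :=
  exists l, l <= n /\
    forall u, [/\ size (inp G u).1 = l, size (inp G u).2 = l &
                  all (fun s => size s == c * up_log 2 n) ((inp G u).1 ++ (inp G u).2)].

Definition SetEquality (n : nat) (G : instance SE_input n) : Prop :=
  perm_eq (flatten [seq (inp G u).1 | u <- enum 'I_n])
          (flatten [seq (inp G u).2 | u <- enum 'I_n]).

From mathcomp Require Import all_boot all_algebra finfield zify.
Set Implicit Arguments. Unset Strict Implicit. Unset Printing Implicit Defensive.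
Import GRing.Theory.

(* Read (c log n)-bit strings as elements of the field F with 2^k elements,
   k = (c+3) log n + 2.  The multisets A and B are equal iff the polynomials
   P_A = prod_{a in A} (X - a) and P_B coincide.  Every node draws k coins.
   The prover fixes a BFS spanning tree rooted at a node rho, tells every
   node the coins z of rho, its parent, its depth and its subtree product
   S(u) = prod_{w below u} g_w(z), where g_w(z) = prod_{a in A_w} (z - a) /
   prod_{b in B_w} (z - b).  A node checks that its neighbours announce the
   same z, that it has a shallower parent or is a root whose coins are z
   with S = 1, and that S(u) = g_u(z) * prod_{children v} S(v) is nonzero.
   - Completeness: the honest prover fails only if z is a root of P_A,
     which has probability at most n^2 / 2^k < 1/3.
   - Soundness: if all nodes accept, a node of minimal depth is a root, and
     multiplying the recursions gives P_A(z) = P_B(z) for the coins z of a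
     node; by the union bound this has probability at most n^3 / 2^k < 1/3.
   The file develops bit encodings, field coding, counting over coin
   assignments and BFS subtree products, then the protocol, its soundness
   and completeness, and finally the theorem. *)

Fixpoint nat2bits (w x : nat) : seq bool :=
  if w is w'.+1 then odd x :: nat2bits w' x./2 else [::].
Fixpoint bits2nat (s : seq bool) : nat :=
  if s is b :: s' then b + (bits2nat s').*2 else 0.

Lemma size_nat2bits w x : size (nat2bits w x) = w.
Proof. by elim: w x => //= w IH x; rewrite IH. Qed.

Lemma nat2bitsK w x : x < 2 ^ w -> bits2nat (nat2bits w x) = x.
Proof.
elim: w x => [|w IH] x /=; first by rewrite expn0; case: x.
move=> hx; rewrite IH; first by rewrite -[in RHS](odd_double_half x).
rewrite expnS -(odd_double_half x) -muln2 in hx.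
by move: hx; case: (odd x) => /=; lia.
Qed.

Lemma bits2nat_lt s : bits2nat s < 2 ^ size s.
Proof. by elim: s => //= b s IH; rewrite expnS -!muln2; case: b => /=; lia. Qed.

Lemma bits2nat_inj s t : size s = size t -> bits2nat s = bits2nat t -> s = t.
Proof.
elim: s t => [|b s IH] [|b' t] //= [hs] h.
have eb : b = b' by move: (congr1 odd h); rewrite /= !oddD !odd_double !addbF !oddb.
subst b'; congr (_ :: _); apply: IH => //; move: h; rewrite -!muln2; lia.
Qed.

Definition pack (B : nat) (xs : seq nat) : seq bool :=
  flatten [seq nat2bits B x | x <- xs].
Definition unpack (B i : nat) (m : seq bool) : nat :=
  bits2nat (take B (drop (i * B) m)).

Lemma size_pack B xs : size (pack B xs) = size xs * B.
Proof.
by elim: xs => //= x xs IH; rewrite /pack /= size_cat size_nat2bits -/(pack B xs) IH.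
Qed.

Lemma unpack_pack B xs i : all (fun x => x < 2 ^ B) xs -> i < size xs ->
  unpack B i (pack B xs) = nth 0 xs i.
Proof.
elim: xs i => [|x xs IH] [|i] //= /andP[hx hxs] hi.
  by rewrite /unpack /pack /= mul0n drop0 take_size_cat ?size_nat2bits // nat2bitsK.
rewrite -IH // /unpack /pack /= mulSn drop_cat size_nat2bits.
have -> : (B + i * B < B) = false by lia.
by rewrite addKn.
Qed.

Section FieldCode.
Variable F : finFieldType.
Local Open Scope ring_scope.

Definition nat2F (x : nat) : F := odflt 0 (omap enum_val (insub x : option 'I_#|F|)).
Definition F2nat (y : F) : nat := enum_rank y.

Lemma F2natK : cancel F2nat nat2F.
Proof. by move=> y; rewrite /nat2F /F2nat valK /= enum_rankK. Qed.

Lemma F2nat_lt y : (F2nat y < #|F|)%N.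
Proof. exact: ltn_ord. Qed.

Lemma nat2F_inj x y : (x < #|F|)%N -> (y < #|F|)%N -> nat2F x = nat2F y -> x = y.
Proof.
move=> hx hy; rewrite /nat2F.
case: insubP => [i _ ei|]; last by rewrite hx.
case: insubP => [j _ ej|]; last by rewrite hy.
by move=> /= /enum_val_inj eij; rewrite -ei -ej eij.
Qed.

Lemma card_roots_lt (p : {poly F}) : p != 0 -> (#|[set x | root p x]| < size p)%N.
Proof.
move=> p0; rewrite cardE; apply: max_poly_roots => //; last exact: enum_uniq.
by apply/allP => x; rewrite mem_enum inE.
Qed.

End FieldCode.

Lemma perm_map_inj_in (T1 T2 : eqType) (f : T1 -> T2) (D : pred T1) (s t : seq T1) :
  {in D &, injective f} -> all D s -> all D t ->
  perm_eq (map f s) (map f t) -> perm_eq s t.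
Proof.
move=> fi ds dt h; apply/allP => x _ /=; apply/eqP.
have [xD|xD] := boolP (x \in D); last first.
  rewrite (count_memPn (contra (allP ds x) xD)).
  by rewrite (count_memPn (contra (allP dt x) xD)).
have e r : all D r -> count_mem x r = count_mem (f x) (map f r).
  move=> dr; rewrite count_map; apply: eq_in_count => y yr /=.
  by apply/eqP/eqP => [->//|/esym/fi ->//]; exact: (allP dr).
by rewrite (e _ ds) (e _ dt); exact: (permP h).
Qed.

Lemma union_bound (I T : finType) (A : {pred I}) (p : I -> pred T) :
  #|[pred r | [exists u in A, p u r]]| <= \sum_(u in A) #|[pred r | p u r]|.
Proof.
have E (q : pred T) : #|[pred r | q r]| = \sum_r (q r : nat).
  by rewrite -sum1_card big_mkcond /=; apply: eq_bigr => r _; rewrite inE; case: (q r).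
rewrite E (eq_bigr (fun u => \sum_r (p u r : nat))); last by move=> u _; rewrite E.
rewrite exchange_big /=; apply: leq_sum => r _.
by case: existsP => [[u /andP[uA pu]]|] //=; rewrite (bigD1 u) //= pu.
Qed.

Lemma card_coord (aT T : finType) (u : aT) (S : pred T) :
  #|[pred r : {ffun aT -> T} | r u \in S]| * #|T| = #|S| * #|{: {ffun aT -> T}}|.
Proof.
pose Fm := fun x : aT => if x == u then S else (predT : pred T).
have -> : #|[pred r : {ffun aT -> T} | r u \in S]| = #|family Fm|.
  apply: eq_card => r; rewrite !inE; apply/idP/familyP => [h x|/(_ u)].
    by rewrite /Fm; case: eqP => [->|].
  by rewrite /Fm eqxx.
rewrite card_family card_ffun foldrE big_map big_enum /= (bigD1 u) //= /Fm eqxx.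
rewrite -prod_nat_const [in RHS](bigD1 u) //= (eq_bigr (fun _ => #|T|)).
  by rewrite mulnAC mulnA.
by move=> x xu; rewrite (negbTE xu); apply: eq_card.
Qed.

Lemma card_hits (aT T : finType) (A : {pred aT}) (S : pred T) :
  #|[pred r : {ffun aT -> T} | [exists u in A, r u \in S]]| * #|T|
    <= #|A| * #|S| * #|{: {ffun aT -> T}}|.
Proof.
apply: leq_trans
  (leq_mul (union_bound A (fun u (r : {ffun aT -> T}) => r u \in S)) (leqnn #|T|)) _.
rewrite big_distrl /= (eq_bigr (fun _ => #|S| * #|{: {ffun aT -> T}}|)).
  by rewrite sum_nat_const mulnA.
by move=> u _; exact: card_coord.
Qed.

Lemma small_fraction X N K m : 0 < N -> X * K <= m * N -> 3 * m < K -> 3 * X < N.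
Proof.
move=> N0 hX hm; have K0 : 0 < K by lia.
have h1 : 3 * X * K <= 3 * m * N by rewrite -!mulnA leq_mul2l hX orbT.
have h2 : 3 * m * N < K * N by rewrite ltn_pmul2r.
by rewrite -(ltn_pmul2r K0) [N * K]mulnC (leq_ltn_trans h1 h2).
Qed.

Lemma card_coin_space_gt0 (I : Type) (P : dAM_protocol I) (n : nat) :
  0 < #|{: coin_space P n}|.
Proof. by rewrite card_ffun card_tuple card_bool !expn_gt0. Qed.

Lemma no_nodes_accept (I : Type) (P : dAM_protocol I) (G : instance I 0) (M : prover P 0) :
  n_accept G M = #|{: coin_space P 0}|.
Proof. by apply: eq_card => r; rewrite !inE; apply/forallP => -[]. Qed.

Section BFSTree.
Variables (T : finType) (nbrs : T -> seq T) (rho : T).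
Let e : rel T := fun u v => v \in nbrs u.
Hypothesis nbrs_sym : forall u v, (v \in nbrs u) = (u \in nbrs v).
Hypothesis connected : forall u v, connect e u v.

Definition reach (u : T) (k : nat) : bool :=
  [exists p : k.-tuple T, path e rho p && (last rho p == u)].

Lemma reachP u k :
  reflect (exists p, [/\ size p = k, path e rho p & last rho p = u]) (reach u k).
Proof.
apply: (iffP existsP) => [[t /andP[h1 /eqP h2]]|[p [sp h1 h2]]].
  by exists (val t); rewrite size_tuple.
have sp' : size p == k by apply/eqP.
by exists (Tuple sp'); rewrite /= h1 h2 eqxx.
Qed.

Definition depth (u : T) : nat := find (reach u) (iota 0 #|T|).

(* Shortening a walk to a simple path shows the depth is below #|T|. *)
Lemma reach_small u : exists2 k, k < #|T| & reach u k.
Proof.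
have /connectP[p pp ->] := connected rho u.
have [p' pp' up' _] := shortenP pp.
exists (size p'); last by apply/reachP; exists p'.
by move/card_uniqP: up'; rewrite -ltnS /= => <-; rewrite ltnS max_card.
Qed.

Lemma depth_lt u : depth u < #|T|.
Proof.
have [k kT rk] := reach_small u.
rewrite /depth -[X in _ < X](size_iota 0) -has_find; apply/hasP; exists k => //.
by rewrite mem_iota.
Qed.

Lemma reach_depth u : reach u (depth u).
Proof.
have := nth_find 0 (_ : has (reach u) (iota 0 #|T|)).
rewrite nth_iota ?add0n; last exact: depth_lt.
by apply; have := depth_lt u; rewrite /depth -[X in _ < X](size_iota 0) -has_find.
Qed.

Lemma depth_min u k : reach u k -> depth u <= k.
Proof.
move=> rk; rewrite leqNgt; apply/negP => kd.
have := before_find 0 kd; rewrite nth_iota; last by have := depth_lt u; lia.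
by rewrite add0n rk.
Qed.

Lemma depth_rho : depth rho = 0.
Proof. by apply/eqP; rewrite -leqn0 depth_min //; apply/reachP; exists [::]. Qed.

Lemma depth0 u : depth u = 0 -> u = rho.
Proof.
move=> h; have /reachP[[|x p] [sp _ lp]] := reach_depth u; first by rewrite -lp.
by rewrite h in sp.
Qed.

Lemma depth_edge u v : v \in nbrs u -> depth v <= (depth u).+1.
Proof.
move=> uv; apply: depth_min; have /reachP[p [sp pp lp]] := reach_depth u.
apply/reachP; exists (rcons p v).
by rewrite size_rcons sp last_rcons rcons_path pp lp.
Qed.

Lemma depth_pred u : u != rho -> exists2 v, v \in nbrs u & depth v = (depth u).-1.
Proof.
move=> ur; have /reachP[p [sp pp lp]] := reach_depth u.
case/lastP: p sp pp lp => [|p x]; first by move=> _ _ /= h; rewrite h eqxx in ur.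
rewrite size_rcons rcons_path last_rcons => sp /andP[pp ex] xu; subst u.
exists (last rho p); first by rewrite nbrs_sym.
apply/eqP; rewrite eqn_leq -sp /=; apply/andP; split.
  by apply: depth_min; apply/reachP; exists p.
by have := depth_edge ex; rewrite -sp /=; lia.
Qed.

Definition parent (u : T) : T :=
  if u == rho then rho
  else odflt rho [pick v | (v \in nbrs u) && (depth v == (depth u).-1)].

Lemma parent_rho : parent rho = rho.
Proof. by rewrite /parent eqxx. Qed.

Lemma parentP u : u != rho ->
  [/\ parent u \in nbrs u, depth (parent u) = (depth u).-1 & 0 < depth u].
Proof.
move=> ur; rewrite /parent (negbTE ur).
case: pickP => [v /andP[h1 /eqP h2]|h]; last first.
  by have [v h1 h2] := depth_pred ur; have := h v; rewrite h1 h2 eqxx.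
split=> //; rewrite lt0n; apply/eqP => /depth0 h0; by rewrite h0 eqxx in ur.
Qed.

Lemma depth_parent u : depth (parent u) = (depth u).-1.
Proof. by have [->|/parentP[]//] := eqVneq u rho; rewrite parent_rho depth_rho. Qed.

Lemma depth_iter_parent k u : depth (iter k parent u) = depth u - k.
Proof. by elim: k => [|k IH]; rewrite ?subn0 //= depth_parent IH; lia. Qed.

Lemma depth_child v : v != rho -> depth v = (depth (parent v)).+1.
Proof. by move=> /parentP[_ -> h]; lia. Qed.

Definition subtree (u : T) : {set T} :=
  [set w | (depth u <= depth w) && (iter (depth w - depth u) parent w == u)].

Lemma subtree_rho : subtree rho = setT.
Proof.
apply/setP => w; rewrite !inE depth_rho leq0n subn0 /=.
by apply/eqP/depth0; rewrite depth_iter_parent subnn.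
Qed.

Lemma subtree_self u : u \in subtree u.
Proof. by rewrite inE leqnn subnn eqxx. Qed.

Lemma subtree_depth_neq u w : w \in subtree u -> w != u -> depth w != depth u.
Proof.
rewrite inE => /andP[_ /eqP h] wu; apply: contra wu => /eqP dwu.
by rewrite -h dwu subnn.
Qed.

(* The ancestor of a proper descendant w of u just below u: the child of u
   through which w hangs. *)
Definition child_toward (u w : T) : T := iter (depth w - depth u).-1 parent w.

Lemma child_towardP u w : w \in subtree u -> w != u ->
  let v := child_toward u w in [/\ v != rho, parent v = u & v \in nbrs u].
Proof.
move=> wd wu v; have ne := subtree_depth_neq wd wu.
move: wd; rewrite inE => /andP[h1 /eqP h2].
have pv : parent v = u.
  by rewrite /v /child_toward -iterS (_ : _.-1.+1 = depth w - depth u) //; lia.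
have vr : v != rho.
  apply/eqP => vr; have := depth_iter_parent (depth w - depth u).-1 w.
  by rewrite -/(child_toward u w) -/v vr depth_rho; lia.
by split=> //; have [h _ _] := parentP vr; rewrite nbrs_sym -pv.
Qed.

Lemma mem_subtree_child u v w : v != rho -> parent v = u ->
  (w \in subtree v) = [&& w \in subtree u, w != u & child_toward u w == v].
Proof.
move=> vr pv; have dv := depth_child vr; rewrite pv in dv.
apply/idP/idP.
  rewrite !inE /child_toward => /andP[h1 /eqP h2].
  have -> : depth w - depth u = (depth w - depth v).+1 by lia.
  rewrite iterS h2 pv !eqxx !andbT; apply/andP; split; first lia.
  by apply/eqP => wu; move: h1; rewrite wu dv ltnn.
case/and3P => wd wu /eqP h3; have ne := subtree_depth_neq wd wu.
move: wd; rewrite !inE /child_toward in h3 * => /andP[h1 _].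
have -> : depth w - depth v = (depth w - depth u).-1 by lia.
by rewrite h3 eqxx andbT dv; lia.
Qed.

Section SubtreeProduct.
Local Open Scope ring_scope.
Variables (R : comNzRingType) (g : T -> R).

Definition subtree_prod (u : T) : R := \prod_(w in subtree u) g w.

Lemma subtree_prod_rec u : uniq (nbrs u) ->
  subtree_prod u = g u * \prod_(v <- nbrs u | (v != rho) && (parent v == u)) subtree_prod v.
Proof.
move=> U; rewrite /subtree_prod (bigD1 u) ?subtree_self //=; congr (_ * _).
rewrite (partition_big (child_toward u)
   (fun v => [&& v \in nbrs u, v != rho & parent v == u])); last first.
  by move=> w /andP[wd wu]; have [h1 h2 h3] := child_towardP wd wu; rewrite h1 h2 h3 eqxx.
rewrite -[in RHS]big_filter big_uniq ?filter_uniq //=.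
apply: eq_big => [v|v]; first by rewrite mem_filter andbC.
case/and3P => vu vr /eqP pv; apply: eq_bigl => w.
by rewrite (mem_subtree_child w vr pv) -andbA.
Qed.

Lemma subtree_prod_rho : subtree_prod rho = \prod_w g w.
Proof. by rewrite /subtree_prod subtree_rho; apply: eq_bigl => w; rewrite inE. Qed.

End SubtreeProduct.
End BFSTree.

Lemma leq_expn2r m n e : m <= n -> m ^ e <= n ^ e.
Proof. by move=> h; elim: e => // e IH; rewrite !expnS leq_mul. Qed.

Section Protocol.
Variables c idc : nat.

(* Each node draws k = (c+3) log n + 2 coins, read as an element of the
   field with 2^k elements; each of the five fields of a prover message has
   (c+3+idc) log n + 2 bits, enough for coins, identifiers and depths. *)
Definition coin_len (n : nat) : nat := (c + 3) * up_log 2 n + 2.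
Definition field_len (n : nat) : nat := (c + 3 + idc) * up_log 2 n + 2.

Lemma coin_len_gt0 n : 0 < coin_len n.
Proof. by rewrite /coin_len addn2. Qed.

Definition Fn (n : nat) : finFieldType :=
  s2val (pPrimePowerField (isT : prime 2) (coin_len_gt0 n)).

Lemma card_Fn n : #|Fn n| = 2 ^ coin_len n.
Proof. exact: (s2valP' (pPrimePowerField (isT : prime 2) (coin_len_gt0 n))). Qed.

Lemma coin_len_le_field n : coin_len n <= field_len n.
Proof. rewrite /coin_len /field_len; nia. Qed.

(* The field is large: 3 n^3 < 2^k, so that n^3 bad coin values are rare. *)
Lemma coin_len_large n : 3 * (n * (n * n)) < 2 ^ coin_len n.
Proof.
rewrite /coin_len expnD [((c + 3) * _)]mulnC expnM; set q := 2 ^ up_log 2 n.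
have hq : n <= q := up_logP n (isT : 1 < 2).
have q1 : 0 < q by rewrite expn_gt0.
have : n * (n * n) <= q ^ (c + 3).
  rewrite (_ : n * (n * n) = n ^ 3); last by rewrite !expnS expn0 muln1.
  by apply: leq_trans (leq_expn2r 3 hq) (leq_pexp2l q1 _); rewrite leq_addl.
have : 0 < q ^ (c + 3) by rewrite expn_gt0 q1.
by lia.
Qed.

Lemma lt_field_len n x : x < n -> x < 2 ^ field_len n.
Proof.
move=> h; apply: leq_trans h (leq_trans (up_logP n (isT : 1 < 2)) _).
by rewrite leq_exp2l // /field_len; nia.
Qed.

Lemma ident_lt_field_len n x : x < n ^ idc -> x < 2 ^ field_len n.
Proof.
move=> h; apply: leq_trans h (leq_trans (leq_expn2r idc (up_logP n (isT : 1 < 2))) _).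
by rewrite -expnM leq_exp2l // /field_len; nia.
Qed.

Lemma psize_log : is_O_log (fun n => 5 * field_len n).
Proof.
exists (10 * (c + 4 + idc)), 2 => n n2.
have t1 : 1 <= trunc_log 2 n by rewrite trunc_log_gt0.
have : up_log 2 n <= 2 * trunc_log 2 n.
  apply: up_log_min => //; apply: ltnW; apply: leq_trans (trunc_log_ltn n (isT : 1 < 2)) _.
  by rewrite leq_exp2l //; lia.
by rewrite /field_len; nia.
Qed.

Local Open Scope ring_scope.

Definition str2F n (s : seq bool) : Fn n := nat2F (Fn n) (bits2nat s).

Lemma str2F_inj n s t : size s = (c * up_log 2 n)%N -> size t = (c * up_log 2 n)%N ->
  str2F n s = str2F n t -> s = t.
Proof.
move=> hs ht /nat2F_inj h; apply: bits2nat_inj; first by rewrite hs ht.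
have lt x : size x = (c * up_log 2 n)%N -> (bits2nat x < #|Fn n|)%N.
  move=> hx; rewrite card_Fn; apply: leq_trans (bits2nat_lt x) _.
  by rewrite hx leq_exp2l // /coin_len; nia.
exact: h (lt _ hs) (lt _ ht).
Qed.

Lemma coin_str2F_inj n : injective (fun t : (coin_len n).-tuple bool => str2F n t).
Proof.
move=> t1 t2 /nat2F_inj h; apply: val_inj; apply: bits2nat_inj; rewrite ?size_tuple //.
by apply: h; rewrite card_Fn; apply: leq_trans (bits2nat_lt _) _; rewrite size_tuple.
Qed.

(* The contribution g_x(z) = prod_{a in A_x} (z - a) / prod_{b in B_x} (z - b)
   of a node with input x; the product over all nodes is P_A(z) / P_B(z). *)
Definition ratio n (x : SE_input) (z : Fn n) : Fn n :=
  \prod_(a <- x.1) (z - str2F n a) / \prod_(b <- x.2) (z - str2F n b).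

(* The five fields of a prover message: the root's coins z, whether the node
   is not the root, its parent's identifier, its depth, and the product of
   the contributions over its subtree. *)
Definition msg_coin n m := unpack (field_len n) 0 m.
Definition msg_nonroot n m := unpack (field_len n) 1 m.
Definition msg_parent n m := unpack (field_len n) 2 m.
Definition msg_depth n m := unpack (field_len n) 3 m.
Definition msg_prod n m : Fn n := nat2F (Fn n) (unpack (field_len n) 4 m).

Definition se_decide (n id : nat) (x : SE_input) (ns : seq nat) (t m : seq bool)
    (ms : seq (seq bool)) : bool :=
  [&& all (fun m' => msg_coin n m' == msg_coin n m) ms,
      if msg_nonroot n m == 0%N then (msg_coin n m == bits2nat t) && (msg_prod n m == 1)
      else has (fun p => (p.1 == msg_parent n m) && (msg_depth n p.2 < msg_depth n m)%N)
               (zip ns ms),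
      msg_prod n m != 0 &
      msg_prod n m == ratio x (nat2F (Fn n) (msg_coin n m)) *
        \prod_(p <- zip ns ms | (msg_nonroot n p.2 != 0%N) && (msg_parent n p.2 == id))
           msg_prod n p.2].

Definition se_protocol : dAM_protocol SE_input :=
  DAMProtocol coin_len (fun n => 5 * field_len n)%N se_decide.

Definition coin_pt n (t : (coin_len n).-tuple bool) : Fn n := str2F n t.

Lemma rare_coin_roots n (A : {pred 'I_n}) (p : {poly Fn n}) :
  p != 0 -> (size p <= (n * n).+1)%N -> (#|A| <= n)%N ->
  (3 * #|[pred r : coin_space se_protocol n | [exists u in A, root p (coin_pt (r u))]]|
     < #|{: coin_space se_protocol n}|)%N.
Proof.
move=> p0 sp An; pose S := [pred t | root p (coin_pt t)].
have hS : (#|S| <= n * n)%N.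
  rewrite -ltnS; apply: leq_trans sp; apply: leq_trans (card_roots_lt p0).
  rewrite -(card_imset _ (@coin_str2F_inj n)) ltnS subset_leq_card //.
  by apply/subsetP => x /imsetP[t]; rewrite !inE => ht ->.
have hits := card_hits A S; rewrite card_tuple card_bool in hits.
apply: (small_fraction (card_coin_space_gt0 _ _) _ (coin_len_large n)).
apply: leq_trans hits _; rewrite leq_mul2r; apply/orP; right.
exact: leq_mul.
Qed.

End Protocol.

Section Instance.
Variables (c n : nat) (G : instance SE_input n).
Local Notation F := (Fn c n).
Local Open Scope ring_scope.

Definition listA : seq (seq bool) := flatten [seq (inp G u).1 | u <- enum 'I_n].
Definition listB : seq (seq bool) := flatten [seq (inp G u).2 | u <- enum 'I_n].
Definition polyA : {poly F} := \prod_(a <- listA) ('X - (str2F c n a)%:P).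
Definition polyB : {poly F} := \prod_(b <- listB) ('X - (str2F c n b)%:P).

Lemma prod_ratio (z : F) : \prod_u ratio (inp G u) z = polyA.[z] / polyB.[z].
Proof.
rewrite big_split /= prodfV /polyA /polyB !horner_prod /listA /listB.
rewrite !big_flatten !big_map -!enumT !big_enum /=.
by congr (_ / _); apply: eq_bigr => u _; apply: eq_bigr => a _; rewrite hornerXsubC.
Qed.

Lemma size_flatten_inputs (f : SE_input -> seq (seq bool)) :
  (forall u, size (f (inp G u)) <= n)%N ->
  (size (flatten [seq f (inp G u) | u <- enum 'I_n]) <= n * n)%N.
Proof.
move=> h; rewrite size_flatten /shape -map_comp -[X in (_ <= X * _)%N]card_ord cardE.
by elim: (enum 'I_n) => //= u s IH; rewrite mulSn leq_add.
Qed.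

Section WellFormedInput.
Hypothesis wfS : wf_SE c G.

Lemma size_polyA : (size polyA <= (n * n).+1)%N.
Proof.
rewrite size_prod_XsubC ltnS; apply: size_flatten_inputs => u.
by case: wfS => l [ln /(_ u)[-> _ _]].
Qed.

Lemma size_polyB : (size polyB <= (n * n).+1)%N.
Proof.
rewrite size_prod_XsubC ltnS; apply: size_flatten_inputs => u.
by case: wfS => l [ln /(_ u)[_ -> _]].
Qed.

Lemma size_polyAB : (size (polyA - polyB)%R <= (n * n).+1)%N.
Proof.
apply: leq_trans (size_polyD _ _) _.
by rewrite size_polyN geq_max size_polyA size_polyB.
Qed.

Lemma size_input_strings s : (s \in listA) || (s \in listB) -> size s = (c * up_log 2 n)%N.
Proof.
case: wfS => l [_ h] sAB; apply/eqP.
have [u su] : exists u, s \in (inp G u).1 ++ (inp G u).2.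
  case/orP: sAB => /flattenP[x /mapP[u _ ->] xs]; exists u; by rewrite mem_cat xs ?orbT.
by case: (h u) => _ _ /allP; apply.
Qed.

(* Since input strings are coded injectively, P_A = P_B forces A = B. *)
Lemma polyAB_neq0 : ~ SetEquality G -> polyA - polyB != 0.
Proof.
move=> nse; rewrite subr_eq0; apply/eqP => eAB; apply: nse.
rewrite /polyA /polyB -!(big_map (str2F c n) xpredT (fun x => 'X - x%:P)) in eAB.
apply: (perm_map_inj_in (D := fun s => size s == (c * up_log 2 n)%N)) (prod_XsubC_eq eAB).
- by move=> x y /eqP hx /eqP hy; apply: str2F_inj.
- by apply/allP => x xA; rewrite size_input_strings ?xA.
- by apply/allP => x xB; rewrite size_input_strings ?xB ?orbT.
Qed.

End WellFormedInput.
End Instance.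

Section Soundness.
Variables (c idc n : nat) (G : instance SE_input n).
Hypothesis wfG : wf_instance idc G.
Local Notation F := (Fn c n).
Local Notation P := (se_protocol c idc).
Local Open Scope ring_scope.

Section Accepting.
Variables (r : coin_space P n) (m : 'I_n -> seq bool).
Hypothesis accepts : forall u, node_accepts G r m u.

Local Notation coin u := (msg_coin c idc n (m u)).
Local Notation nonroot u := (msg_nonroot c idc n (m u)).
Local Notation par u := (msg_parent c idc n (m u)).
Local Notation dep u := (msg_depth c idc n (m u)).
Local Notation sprod u := (msg_prod c idc n (m u)).

Let decides u : se_decide c idc n (ident G u) (inp G u) [seq ident G v | v <- adj G u]
  (val (r u)) (m u) [seq m v | v <- adj G u] := accepts u.

(* Neighbours agree on z, hence by connectivity all nodes do. *)
Lemma accept_coin_const u v : coin u = coin v.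
Proof.
have Zadj w w' : w' \in adj G w -> coin w' = coin w.
  move=> ww'; case/and4P: (decides w) => /allP h _ _ _.
  by apply/eqP; apply: h; apply: map_f.
case: wfG => _ _ conn _ _; have /connectP[p pp ->] := conn u v.
elim: p u pp => [|w p IH] u //= /andP[uw pp].
by rewrite -(IH _ pp) (Zadj u w).
Qed.

(* A node of minimal announced depth cannot point to a shallower parent,
   so it claims to be a root. *)
Lemma accept_root_exists (u0 : 'I_n) : exists u, nonroot u = 0%N.
Proof.
case: (@arg_minnP _ u0 xpredT (fun u => dep u) isT) => u _ umin; exists u.
case/and4P: (decides u) => _ + _ _; case: eqP => // _.
rewrite zip_map => /hasP[[i mv]] /mapP[v vu [-> ->]] /= /andP[_ lt].
by have := umin v isT; rewrite leqNgt lt.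
Qed.

Lemma accept_root u : nonroot u = 0%N -> coin u = bits2nat (val (r u)) /\ sprod u = 1.
Proof.
by move=> ru; case/and4P: (decides u) => _ + _ _; rewrite ru eqxx => /andP[/eqP -> /eqP ->].
Qed.

Lemma accept_parent v : nonroot v != 0%N -> exists2 w, v \in adj G w & ident G w = par v.
Proof.
move=> rv; case/and4P: (decides v) => _ + _ _; rewrite (negbTE rv) zip_map.
case/hasP=> [[i mv]] /mapP[w wv [-> ->]] /= /andP[/eqP <- _].
by exists w; case: wfG => _ sym _ _ _; rewrite // sym.
Qed.

(* Each non-root node is counted once, as a child of the unique node whose
   identifier it names; root nodes have subtree product 1. *)
Lemma accept_children_cover :
  \prod_w \prod_(v <- adj G w | (nonroot v != 0%N) && (par v == ident G w)) sprod v =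
  \prod_v sprod v.
Proof.
case: wfG => adj_uniq _ _ ident_inj _.
rewrite (eq_bigr (fun w => \prod_(v | (v \in adj G w) &&
    ((nonroot v != 0%N) && (par v == ident G w))) sprod v)); last first.
  move=> w _; rewrite -big_filter big_uniq ?filter_uniq ?(adj_uniq w).1 //.
  by apply: eq_bigl => v; rewrite mem_filter andbC.
rewrite (exchange_big_dep xpredT) //=; apply: eq_bigr => v _.
have [rv|rv] := eqVneq (nonroot v) 0%N.
  by rewrite big_pred0 ?(accept_root rv).2 // => w; rewrite andbF.
have [pv vpv ipv] := accept_parent rv; apply: (big_pred1 pv) => w /=.
by rewrite -ipv; apply/idP/eqP => [/andP[_ /eqP /ident_inj]|->] //; rewrite vpv eqxx.
Qed.

(* Multiplying the checked recursions over all nodes, the subtree products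
   cancel and leave prod_w g_w(z) = 1, i.e. P_A(z) = P_B(z). *)
Lemma accept_telescope u : \prod_w ratio (inp G w) (nat2F F (coin u)) = 1.
Proof.
have rec w : sprod w = ratio (inp G w) (nat2F F (coin u)) *
    \prod_(v <- adj G w | (nonroot v != 0%N) && (par v == ident G w)) sprod v.
  case/and4P: (decides w) => _ _ _ /eqP ->.
  by rewrite zip_map big_map (accept_coin_const w u).
pose X := \prod_w sprod w.
have X0 : X != 0 by apply/prodf_neq0 => w _; case/and4P: (decides w).
apply: (mulIf X0); rewrite mul1r {2}/X (eq_bigr _ (fun w _ => rec w)).
by rewrite [RHS]big_split /= accept_children_cover.
Qed.

Lemma accept_coin_root (u0 : 'I_n) : exists u, root (polyA c G - polyB c G) (coin_pt (r u)).
Proof.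
have [u /accept_root[cu _]] := accept_root_exists u0; exists u.
have := accept_telescope u; rewrite prod_ratio cu -/(coin_pt (r u)) => hAB.
set z := coin_pt (r u) in hAB *.
have PB0 : (polyB c G).[z] != 0.
  by apply: contra_eqN hAB => /eqP ->; rewrite invr0 mulr0 eq_sym oner_eq0.
by rewrite rootE hornerD hornerN subr_eq0 -(divfK PB0 (polyA c G).[z]) hAB mul1r.
Qed.

End Accepting.

Lemma soundness : wf_SE c G -> ~ SetEquality G ->
  forall M : prover P n, (3 * n_accept G M < #|{: coin_space P n}|)%N.
Proof.
move=> wfS nse M.
have n_gt0 : (0 < n)%N.
  by case: n G nse => // G0 []; rewrite /SetEquality (size0nil (size_enum_ord 0)).
apply: leq_ltn_trans _ (@rare_coin_roots c idc n predT _ (polyAB_neq0 wfS nse) _ _); first last.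
- by rewrite card_ord.
- exact: size_polyAB wfS.
rewrite leq_mul2l; apply/orP; right; apply: subset_leq_card; apply/subsetP => r.
rewrite !inE => /forallP acc; have [u hu] := accept_coin_root acc (Ordinal n_gt0).
by apply/existsP; exists u.
Qed.

End Soundness.

Section Completeness.
Variables (c idc n : nat) (G : instance SE_input n) (rho : 'I_n).
Hypothesis wfG : wf_instance idc G.
Local Notation P := (se_protocol c idc).
Local Open Scope ring_scope.

Let adj_uniq u : uniq (adj G u). Proof. by case: wfG => h _ _ _ _; case: (h u). Qed.
Let adj_sym u v : (v \in adj G u) = (u \in adj G v). Proof. by case: wfG. Qed.
Let connected u v : connect (edge G) u v. Proof. by case: wfG. Qed.
Let ident_inj : injective (ident G). Proof. by case: wfG. Qed.

Local Notation depth := (depth (adj G) rho).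
Local Notation parent := (parent (adj G) rho).

Definition honest_fields (r : coin_space P n) (u : 'I_n) : seq nat :=
  [:: bits2nat (val (r rho)); nat_of_bool (u != rho); ident G (parent u); depth u;
      F2nat (subtree_prod (adj G) rho (fun w => ratio (inp G w) (coin_pt (r rho))) u)].

Definition honest_prover : prover P n :=
  fun r u => pack (field_len c idc n) (honest_fields r u).

Lemma honest_prover_ok : prover_ok honest_prover.
Proof. by move=> r u; rewrite /honest_prover size_pack. Qed.

Lemma honest_fields_fit r u : all (fun x => x < 2 ^ field_len c idc n)%N (honest_fields r u).
Proof.
have k_le : (2 ^ coin_len c n <= 2 ^ field_len c idc n)%N.
  by rewrite leq_exp2l // coin_len_le_field.
rewrite /honest_fields /= !andbT; apply/and5P; split.
- by apply: leq_trans (bits2nat_lt _) _; rewrite size_tuple.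
- by apply: leq_ltn_trans (leq_b1 _) _; rewrite -{1}(expn0 2) ltn_exp2l // /field_len addn2.
- by case: wfG => _ _ _ _ /(_ (parent u)) /ident_lt_field_len.
- by apply: lt_field_len; have := depth_lt rho connected u; rewrite card_ord.
- by apply: leq_trans k_le; rewrite -card_Fn; apply: F2nat_lt.
Qed.

Lemma honest_msg r u :
  let m := honest_prover r u in
  [/\ msg_coin c idc n m = bits2nat (val (r rho)),
      msg_nonroot c idc n m = nat_of_bool (u != rho),
      msg_parent c idc n m = ident G (parent u),
      msg_depth c idc n m = depth u &
      msg_prod c idc n m =
        subtree_prod (adj G) rho (fun w => ratio (inp G w) (coin_pt (r rho))) u].
Proof.
rewrite /msg_coin /msg_nonroot /msg_parent /msg_depth /msg_prod /honest_prover.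
by rewrite !unpack_pack ?honest_fields_fit //= F2natK.
Qed.

(* If z = coins of rho is not a root of P_A = P_B, all contributions g_w(z)
   are nonzero and every check of the protocol passes. *)
Lemma honest_accepts (r : coin_space P n) : polyA c G = polyB c G ->
  ~~ root (polyA c G) (coin_pt (r rho)) -> all_accept G honest_prover r.
Proof.
move=> eAB; rewrite /root => PAz; set z := coin_pt (r rho) in PAz *.
have factor_neq0 s (l : seq (seq bool)) : s \in l ->
    (\prod_(a <- l) ('X - (str2F c n a)%:P)).[z] != 0 -> z - str2F c n s != 0.
  by move=> sl; rewrite horner_prod prodf_seq_neq0 => /allP /(_ s sl); rewrite hornerXsubC.
have ratio_neq0 w : ratio (inp G w) z != 0.
  rewrite /ratio mulf_neq0 // ?invr_eq0 prodf_seq_neq0; apply/allP => a ain /=.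
    apply: (factor_neq0 _ (listA G)) PAz.
    by apply/flattenP; exists (inp G w).1 => //; apply: map_f; rewrite mem_enum.
  apply: (factor_neq0 _ (listB G)); last by rewrite -/(polyB c G) -eAB.
  by apply/flattenP; exists (inp G w).2 => //; apply: map_f; rewrite mem_enum.
apply/forallP => u; rewrite /node_accepts /= /se_decide zip_map.
have [-> -> -> -> ->] := honest_msg r u.
apply/and4P; split.
- by apply/allP => x /mapP[v _ ->]; have [-> _ _ _ _] := honest_msg r v.
- have [->|ur] := eqVneq u rho; rewrite /=.
    rewrite eqxx (subtree_prod_rho rho adj_sym connected) prod_ratio -/z eAB mulfV ?eqxx //.
    by move: PAz; rewrite eAB.
  apply/hasP; have [pu_adj pu_depth depth_pos] := parentP adj_sym connected ur.
  exists (ident G (parent u), honest_prover r (parent u)); first exact: map_f pu_adj.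
  by have [_ _ _ -> _] := honest_msg r (parent u); rewrite /= eqxx pu_depth /=; lia.
- by apply/prodf_neq0 => w _.
- rewrite big_map /= (subtree_prod_rec _ adj_sym connected _ (adj_uniq u)).
  apply/eqP; congr (_ * _).
  apply: eq_big => [v|v _]; have [_ hP hQ _ hS] := honest_msg r v; last by rewrite hS.
  by rewrite hP hQ; case: (v != rho) => //=; rewrite (inj_eq ident_inj).
Qed.

Lemma completeness : wf_SE c G -> SetEquality G ->
  (2 * #|{: coin_space P n}| < 3 * n_accept G honest_prover)%N.
Proof.
move=> wfS se; have eAB : polyA c G = polyB c G by rewrite /polyA /polyB (perm_big _ se).
have PA0 : polyA c G != 0 by rewrite monic_neq0 // monic_prod_XsubC.
have rho_le : (#|pred1 rho| <= n)%N by rewrite card1 (leq_ltn_trans _ (ltn_ord rho)).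
have := @rare_coin_roots c idc n (pred1 rho) _ PA0 (size_polyA wfS) rho_le.
set bad := [pred r | _].
have fail_bad : (#|{: coin_space P n}| - n_accept G honest_prover <= #|bad|)%N.
  rewrite -(cardC [pred r | all_accept G honest_prover r]) addKn.
  apply: subset_leq_card; apply/subsetP => r; rewrite !inE; apply: contraR => PAz.
  apply: (honest_accepts (r := r) eAB); apply: contra PAz => hz.
  by apply/existsP; exists rho; rewrite inE eqxx.
by lia.
Qed.

End Completeness.

Theorem mainTheorem5 (c idc : nat) : in_dAM_log idc (wf_SE c) SetEquality.
Proof.
exists (se_protocol c idc); split; last exact: psize_log.
split.
- by move=> n; apply: leq_trans (coin_len_le_field c idc n) (leq_pmull _ _).
- move=> [|n] G [wfG wfS] se.
    exists (fun _ _ => [::]); split=> //; rewrite no_nodes_accept.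
    by have := card_coin_space_gt0 (se_protocol c idc) 0; lia.
  by exists (honest_prover G ord0); split; [exact: honest_prover_ok | exact: completeness].
- by move=> n G [wfG wfS] nse M _; exact: soundness.
Qed.
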